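(* CTL*$_{cd}$ is invariant under cycle-bisimulation: if $\mathcal K_1=(AP,W_1,R_1,L_1,w_{I,1})$ and $\mathcal K_2=(AP,W_2,R_2,L_2,w_{I,2})$ are Kripke structures and $B\subseteq W_1\times W_2$ is a cycle-bisimulation relation, then for every CTL*$_{cd}$ state formula $\varphi$ and every $(w_1,w_2)\in B$ we have $\mathcal K_1,w_1\models\varphi$ iff $\mathcal K_2,w_2\models\varphi$; in particular $\mathcal K_1\models\varphi$ iff $\mathcal K_2\models\varphi$.
   Context: A Kripke structure over a finite set $AP$ of atomic propositions is a tuple $\mathcal K=(AP,W,R,L,w_I)$ where $W$ is a countable non-empty set of worlds, $w_I\in W$ is the initial world, $R\subseteq W\times W$ is a left-total transition relation (every world has at least one $R$-successor), and $L:W\to 2^{AP}$ is a labelling function. A path is an infinite sequence $\pi=\pi_0\pi_1\cdots$ of worlds with $(\pi_i,\pi_{i+1})\in R$ for all $i\in\mathbb N$; $\mathrm{Pth}(w)$ is the set of paths with $\pi_0=w$. A path $\pi$ is a cycle if for every $i\in\mathbb N$ there is $j>i$ with $\pi_j=\pi_0$ (i.e. $\pi_0$ occurs infinitely often in $\pi$); $\mathrm{Cyc}(w)$ is the set of cycles with $\pi_0=w$. Syntax of CTL*$_{cd}$: state formulas $\varphi::=p\mid\neg\varphi\mid\varphi\wedge\varphi\mid\varphi\vee\varphi\mid \mathsf E\psi\mid\mathsf A\psi\mid\mathsf E^{c}\psi\mid\mathsf A^{c}\psi$ with $p\in AP$; path formulas $\psi::=\varphi\mid\neg\psi\mid\psi\wedge\psi\mid\psi\vee\psi\mid\mathsf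 X\psi\mid\psi\,\mathsf U\,\psi$. Semantics: $\mathcal K,w\models p$ iff $p\in L(w)$; Boolean connectives as usual; $\mathcal K,w\models\mathsf E\psi$ iff some $\pi\in\mathrm{Pth}(w)$ has $\mathcal K,\pi,0\models\psi$; $\mathcal K,w\models\mathsf A\psi$ iff every $\pi\in\mathrm{Pth}(w)$ has $\mathcal K,\pi,0\models\psi$; $\mathcal K,w\models\mathsf E^{c}\psi$ iff some $\pi\in\mathrm{Cyc}(w)$ has $\mathcal K,\pi,0\models\psi$; $\mathcal K,w\models\mathsf A^{c}\psi$ iff every $\pi\in\mathrm{Cyc}(w)$ has $\mathcal K,\pi,0\models\psi$. For paths: $\mathcal K,\pi,i\models\varphi$ (state formula) iff $\mathcal K,\pi_i\models\varphi$; Boolean connectives as usual; $\mathcal K,\pi,i\models\mathsf X\psi$ iff $\mathcal K,\pi,i+1\models\psi$; $\mathcal K,\pi,i\models\psi_1\mathsf U\psi_2$ iff there is $k\ge0$ with $\mathcal K,\pi,i+k\models\psi_2$ and $\mathcal K,\pi,i+j\models\psi_1$ for all $0\le j<k$. $\mathcal K\models\varphi$ iff $\mathcal K,w_I\models\varphi$. A relation $B\subseteq W_1\times W_2$ is a cycle-bisimulation relation between $\mathcal K_1$ and $\mathcal K_2$ if $(w_{I,1},w_{I,2})\in B$ and for all $(w_1,w_2)\in B$: (a) $L_1(w_1)=L_2(w_2)$; (b) for every $v_1$ with $(w_1,v_1)\in R_1$ there is $v_2$ with $(w_2,v_2)\in R_2$ and $(v_1,v_2)\in B$; (c) for every $v_2$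 with $(w_2,v_2)\in R_2$ there is $v_1$ with $(w_1,v_1)\in R_1$ and $(v_1,v_2)\in B$; (d) for every cycle $\pi_1$ of $\mathcal K_1$ with first world $w_1$ there is a cycle $\pi_2$ of $\mathcal K_2$ with first world $w_2$ such that $((\pi_1)_i,(\pi_2)_i)\in B$ for all $i\in\mathbb N$; (e) for every cycle $\pi_2$ of $\mathcal K_2$ with first world $w_2$ there is a cycle $\pi_1$ of $\mathcal K_1$ with first world $w_1$ such that $((\pi_1)_i,(\pi_2)_i)\in B$ for all $i\in\mathbb N$. *)

From Stdlib Require Import Arith List.

Definition FiniteT (T : Type) : Prop := exists l : list T, forall x : T, In x l.
Definition CountableT (T : Type) : Prop :=
  exists f : T -> nat, forall x y, f x = f y -> x = y.

(* Kripke structure over AP; a label L w is the subset {p | L w p = true} of AP. *)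
Record Kripke (AP : Type) := mkKripke {
  World : Type;
  R : World -> World -> Prop;
  L : World -> AP -> bool;
  wI : World;
  world_countable : CountableT World;
  R_total : forall w, exists v, R w v
}.

Arguments World {AP} k.
Arguments R {AP} k _ _.
Arguments L {AP} k _ _.
Arguments wI {AP} k.

Definition path {AP} (K : Kripke AP) := nat -> World K.

Definition is_path {AP} (K : Kripke AP) (pi : path K) : Prop :=
  forall i, R K (pi i) (pi (S i)).

Definition Pth {AP} (K : Kripke AP) (w : World K) (pi : path K) : Prop :=
  is_path K pi /\ pi 0 = w.

Definition is_cycle {AP} (K : Kripke AP) (pi : path K) : Prop :=
  is_path K pi /\ forall i, exists j, j > i /\ pi j = pi 0.

Definition Cyc {AP} (K : Kripke AP) (w : World K) (pi : path K) : Prop :=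
  is_cycle K pi /\ pi 0 = w.

Inductive sform (AP : Type) : Type :=
| SAtom : AP -> sform AP
| SNot : sform AP -> sform AP
| SAnd : sform AP -> sform AP -> sform AP
| SOr : sform AP -> sform AP -> sform AP
| SE : pform AP -> sform AP
| SA : pform AP -> sform AP
| SEc : pform AP -> sform AP
| SAc : pform AP -> sform AP
with pform (AP : Type) : Type :=
| PState : sform AP -> pform AP
| PNot : pform AP -> pform AP
| PAnd : pform AP -> pform AP -> pform AP
| POr : pform AP -> pform AP -> pform AP
| PX : pform AP -> pform AP
| PU : pform AP -> pform AP -> pform AP.

Arguments SAtom {AP} _.
Arguments SNot {AP} _.
Arguments SAnd {AP} _ _.
Arguments SOr {AP} _ _.
Arguments SE {AP} _.
Arguments SA {AP} _.
Arguments SEc {AP} _.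
Arguments SAc {AP} _.
Arguments PState {AP} _.
Arguments PNot {AP} _.
Arguments PAnd {AP} _ _.
Arguments POr {AP} _ _.
Arguments PX {AP} _.
Arguments PU {AP} _ _.

Fixpoint sat_s {AP} (K : Kripke AP) (w : World K) (phi : sform AP) : Prop :=
  match phi with
  | SAtom p => L K w p = true
  | SNot f => ~ sat_s K w f
  | SAnd f g => sat_s K w f /\ sat_s K w g
  | SOr f g => sat_s K w f \/ sat_s K w g
  | SE psi => exists pi, Pth K w pi /\ sat_p K pi 0 psi
  | SA psi => forall pi, Pth K w pi -> sat_p K pi 0 psi
  | SEc psi => exists pi, Cyc K w pi /\ sat_p K pi 0 psi
  | SAc psi => forall pi, Cyc K w pi -> sat_p K pi 0 psi
  end
with sat_p {AP} (K : Kripke AP) (pi : path K) (i : nat) (psi : pform AP) : Prop :=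
  match psi with
  | PState f => sat_s K (pi i) f
  | PNot q => ~ sat_p K pi i q
  | PAnd q r => sat_p K pi i q /\ sat_p K pi i r
  | POr q r => sat_p K pi i q \/ sat_p K pi i r
  | PX q => sat_p K pi (S i) q
  | PU q r => exists k, sat_p K pi (i + k) r /\
                        forall j, j < k -> sat_p K pi (i + j) q
  end.

Definition models {AP} (K : Kripke AP) (phi : sform AP) : Prop := sat_s K (wI K) phi.

Definition cycle_bisim {AP} (K1 K2 : Kripke AP)
  (B : World K1 -> World K2 -> Prop) : Prop :=
  B (wI K1) (wI K2) /\
  forall w1 w2, B w1 w2 ->
    L K1 w1 = L K2 w2 /\
    (forall v1, R K1 w1 v1 -> exists v2, R K2 w2 v2 /\ B v1 v2) /\
    (forall v2, R K2 w2 v2 -> exists v1, R K1 w1 v1 /\ B v1 v2) /\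
    (forall pi1, Cyc K1 w1 pi1 ->
       exists pi2, Cyc K2 w2 pi2 /\ forall i, B (pi1 i) (pi2 i)) /\
    (forall pi2, Cyc K2 w2 pi2 ->
       exists pi1, Cyc K1 w1 pi1 /\ forall i, B (pi1 i) (pi2 i)).

(* The satisfaction of a path formula along a path depends only on the state
   formulas holding at its positions, so it suffices to pair every path (cycle)
   from one side with a path (cycle) from the other side that stays related by
   B at each position.  For cycles this pairing is exactly what a
   cycle-bisimulation provides; for arbitrary paths it is obtained by iterating
   the forth (resp. back) condition step by step, using choice.  A simultaneous
   induction on state and path formulas then shows that related worlds satisfy
   the same state formulas and lockstep-related paths the same path formulas. *)
From Stdlib Require Import ClassicalEpsilon.

Definition lockstep {X Y : Type} (Rel : X -> Y -> Prop)
  (p : nat -> X) (q : nat -> Y) : Prop :=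
  forall i, Rel (p i) (q i).

Section PathLifting.
Variables (X Y : Type) (RX : X -> X -> Prop) (RY : Y -> Y -> Prop)
  (Rel : X -> Y -> Prop).
Hypothesis forth :
  forall x y, Rel x y -> forall x', RX x x' -> exists y', RY y y' /\ Rel x' y'.

Lemma path_lift (p : nat -> X) (y0 : Y) :
  (forall i, RX (p i) (p (S i))) -> Rel (p 0) y0 ->
  exists q : nat -> Y,
    q 0 = y0 /\ (forall i, RY (q i) (q (S i))) /\ lockstep Rel p q.
Proof.
  intros Hp H0.
  pose (next := fun n (y : {y | Rel (p n) y}) =>
    constructive_indefinite_description _ (forth _ _ (proj2_sig y) _ (Hp n))).
  pose (q := nat_rect (fun n => {y | Rel (p n) y}) (exist _ y0 H0)
    (fun n y => exist _ (proj1_sig (next n y)) (proj2 (proj2_sig (next n y))))).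
  exists (fun n => proj1_sig (q n)); repeat split.
  - intro i; exact (proj1 (proj2_sig (next i (q i)))).
  - intro i; exact (proj2_sig (q i)).
Qed.
End PathLifting.

Section MatchedQuantifiers.
Variables (X Y : Type) (P1 Q1 : X -> Prop) (P2 Q2 : Y -> Prop)
  (M : X -> Y -> Prop).
Hypothesis match_forth : forall x, P1 x -> exists y, P2 y /\ M x y.
Hypothesis match_back : forall y, P2 y -> exists x, P1 x /\ M x y.
Hypothesis matched_iff : forall x y, M x y -> (Q1 x <-> Q2 y).

Lemma ex_iff_matched :
  (exists x, P1 x /\ Q1 x) <-> (exists y, P2 y /\ Q2 y).
Proof.
  split.
  - intros (x & Hx & HQ); destruct (match_forth x Hx) as (y & Hy & Hm).
    exists y; split; [exact Hy | apply (matched_iff x y Hm); exact HQ].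
  - intros (y & Hy & HQ); destruct (match_back y Hy) as (x & Hx & Hm).
    exists x; split; [exact Hx | apply (matched_iff x y Hm); exact HQ].
Qed.

Lemma all_iff_matched :
  (forall x, P1 x -> Q1 x) <-> (forall y, P2 y -> Q2 y).
Proof.
  split.
  - intros H y Hy; destruct (match_back y Hy) as (x & Hx & Hm).
    apply (matched_iff x y Hm); exact (H x Hx).
  - intros H x Hx; destruct (match_forth x Hx) as (y & Hy & Hm).
    apply (matched_iff x y Hm); exact (H y Hy).
Qed.
End MatchedQuantifiers.

Scheme sform_mut_ind := Induction for sform Sort Prop
with pform_mut_ind := Induction for pform Sort Prop.
Combined Scheme form_mut_ind from sform_mut_ind, pform_mut_ind.

Section CycleBisimulation.
Variables (AP : Type) (K1 K2 : Kripke AP) (B : World K1 -> World K2 -> Prop).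
Hypothesis bisim : cycle_bisim K1 K2 B.

Lemma cycle_bisim_label w1 w2 : B w1 w2 -> L K1 w1 = L K2 w2.
Proof. intro Hw; apply (proj2 bisim _ _ Hw). Qed.

Lemma cycle_bisim_Pth_forth w1 w2 pi1 :
  B w1 w2 -> Pth K1 w1 pi1 -> exists pi2, Pth K2 w2 pi2 /\ lockstep B pi1 pi2.
Proof.
  intros Hw [Hp Hstart]; subst w1.
  assert (forth : forall x y, B x y ->
    forall x', R K1 x x' -> exists y', R K2 y y' /\ B x' y')
    by (intros x y Hxy; apply (proj2 bisim _ _ Hxy)).
  destruct (path_lift _ _ _ _ _ forth pi1 w2 Hp Hw) as (pi2 & Hstart & Hp2 & Hstep).
  exists pi2; repeat split; assumption.
Qed.

Lemma cycle_bisim_Pth_back w1 w2 pi2 :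
  B w1 w2 -> Pth K2 w2 pi2 -> exists pi1, Pth K1 w1 pi1 /\ lockstep B pi1 pi2.
Proof.
  intros Hw [Hp Hstart]; subst w2.
  assert (back : forall y x, B x y ->
    forall y', R K2 y y' -> exists x', R K1 x x' /\ B x' y')
    by (intros y x Hxy; apply (proj2 bisim _ _ Hxy)).
  destruct (path_lift _ _ _ _ (fun y x => B x y) back pi2 w1 Hp Hw)
    as (pi1 & Hstart & Hp1 & Hstep).
  exists pi1; repeat split; assumption.
Qed.

Lemma cycle_bisim_Cyc_forth w1 w2 pi1 :
  B w1 w2 -> Cyc K1 w1 pi1 -> exists pi2, Cyc K2 w2 pi2 /\ lockstep B pi1 pi2.
Proof. intro Hw; apply (proj2 bisim _ _ Hw). Qed.

Lemma cycle_bisim_Cyc_back w1 w2 pi2 :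
  B w1 w2 -> Cyc K2 w2 pi2 -> exists pi1, Cyc K1 w1 pi1 /\ lockstep B pi1 pi2.
Proof. intro Hw; apply (proj2 bisim _ _ Hw). Qed.

Lemma cycle_bisim_sat_iff :
  (forall phi w1 w2, B w1 w2 -> (sat_s K1 w1 phi <-> sat_s K2 w2 phi)) /\
  (forall psi pi1 pi2, lockstep B pi1 pi2 ->
     forall i, sat_p K1 pi1 i psi <-> sat_p K2 pi2 i psi).
Proof.
  apply form_mut_ind; simpl.
  - intros p w1 w2 Hw; rewrite (cycle_bisim_label w1 w2 Hw); tauto.
  - intros f IH w1 w2 Hw; rewrite (IH w1 w2 Hw); tauto.
  - intros f IHf g IHg w1 w2 Hw; rewrite (IHf w1 w2 Hw), (IHg w1 w2 Hw); tauto.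
  - intros f IHf g IHg w1 w2 Hw; rewrite (IHf w1 w2 Hw), (IHg w1 w2 Hw); tauto.
  - intros psi IH w1 w2 Hw; apply ex_iff_matched with (M := lockstep B).
    + intro; apply cycle_bisim_Pth_forth; exact Hw.
    + intro; apply cycle_bisim_Pth_back; exact Hw.
    + intros pi1 pi2 Hpi; exact (IH pi1 pi2 Hpi 0).
  - intros psi IH w1 w2 Hw; apply all_iff_matched with (M := lockstep B).
    + intro; apply cycle_bisim_Pth_forth; exact Hw.
    + intro; apply cycle_bisim_Pth_back; exact Hw.
    + intros pi1 pi2 Hpi; exact (IH pi1 pi2 Hpi 0).
  - intros psi IH w1 w2 Hw; apply ex_iff_matched with (M := lockstep B).
    + intro; apply cycle_bisim_Cyc_forth; exact Hw.
    + intro; apply cycle_bisim_Cyc_back; exact Hw.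
    + intros pi1 pi2 Hpi; exact (IH pi1 pi2 Hpi 0).
  - intros psi IH w1 w2 Hw; apply all_iff_matched with (M := lockstep B).
    + intro; apply cycle_bisim_Cyc_forth; exact Hw.
    + intro; apply cycle_bisim_Cyc_back; exact Hw.
    + intros pi1 pi2 Hpi; exact (IH pi1 pi2 Hpi 0).
  - intros f IH pi1 pi2 Hpi i; exact (IH _ _ (Hpi i)).
  - intros q IH pi1 pi2 Hpi i; rewrite (IH pi1 pi2 Hpi i); tauto.
  - intros q IHq r IHr pi1 pi2 Hpi i.
    rewrite (IHq pi1 pi2 Hpi i), (IHr pi1 pi2 Hpi i); tauto.
  - intros q IHq r IHr pi1 pi2 Hpi i.
    rewrite (IHq pi1 pi2 Hpi i), (IHr pi1 pi2 Hpi i); tauto.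
  - intros q IH pi1 pi2 Hpi i; exact (IH pi1 pi2 Hpi (S i)).
  - intros q IHq r IHr pi1 pi2 Hpi i.
    split; intros (k & Hk & Hbefore); exists k; split;
      try (intros j Hj; specialize (Hbefore j Hj));
      first [apply (IHr pi1 pi2 Hpi) | apply (IHq pi1 pi2 Hpi)]; assumption.
Qed.
End CycleBisimulation.

Theorem mainTheorem2 (AP : Type) (HAP : FiniteT AP) (K1 K2 : Kripke AP)
  (B : World K1 -> World K2 -> Prop) :
  cycle_bisim K1 K2 B ->
  (forall (phi : sform AP) (w1 : World K1) (w2 : World K2),
      B w1 w2 -> (sat_s K1 w1 phi <-> sat_s K2 w2 phi)) /\
  (forall phi : sform AP, models K1 phi <-> models K2 phi).
Proof.
  intro bisim.
  destruct (cycle_bisim_sat_iff AP K1 K2 B bisim) as [state_iff _].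
  split; [exact state_iff |].
  intro phi; apply state_iff, (proj1 bisim).
Qed.
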